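(* Let $\mathscr{H}$ be a complex Hilbert space and let $N(\cdot)$ be a norm on $\mathbb{B}(\mathscr{H})$ which is an algebra norm ($N(XY)\leq N(X)N(Y)$ for all $X,Y\in\mathbb{B}(\mathscr{H})$) and self-adjoint ($N(X^* )=N(X)$ for all $X\in\mathbb{B}(\mathscr{H})$). Then for all $B,C\in\mathbb{B}(\mathscr{H})$, $$\frac18N(C^*C+B^*B)+\frac12\max\{w_N(B),w_N(C)\}\,|w_N(B+C)-w_N(B-C)|\leq w_{(N,e)}^2(B,C).$$
   Context: For $T\in\mathbb{B}(\mathscr{H})$: $\Re(T)=\frac12(T+T^* )$ and $w_N(T)=\sup_{\theta\in\mathbb{R}}N(\Re(e^{i\theta}T))$. For $B,C\in\mathbb{B}(\mathscr{H})$, $w_{(N,e)}(B,C)=\sup_{\lambda_1,\lambda_2\in\mathbb{C},\ |\lambda_1|^2+|\lambda_2|^2\leq 1}\sup_{\theta\in\mathbb{R}} N(\Re(e^{i\theta}(\lambda_1B+\lambda_2C)))$. *)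

From HB Require Import structures.
From mathcomp Require Import all_boot all_order all_algebra.
From mathcomp Require Import complex.
From mathcomp Require Import boolp classical_sets reals trigo.
From Stdlib Require Import ClassicalEpsilon.
Set Implicit Arguments. Unset Strict Implicit. Unset Printing Implicit Defensive.
Import Order.TTheory GRing.Theory Num.Theory.
Local Open Scope ring_scope.
Local Open Scope complex_scope.
Local Open Scope classical_set_scope.

Section Hilbert.
Variables (R : realType) (H : lmodType R[i]) (ip : H -> H -> R[i]).

Definition hnorm (x : H) : R := Num.sqrt (complex.Re (ip x x)).

Record is_hilbert : Prop := IsHilbert {
  ip_linear : forall (a : R[i]) (x y z : H), ip (a *: x + y) z = a * ip x z + ip y z;
  ip_conj : forall x y : H, ip y x = (ip x y)^*;
  ip_pos : forall x : H, 0 <= ip x x;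
  ip_def : forall x : H, ip x x = 0 -> x = 0;
  ip_complete : forall u : nat -> H,
    (forall e : R, 0 < e -> exists M : nat, forall m n : nat, (M <= m)%N -> (M <= n)%N ->
        hnorm (u m - u n) < e) ->
    exists l : H, forall e : R, 0 < e -> exists M : nat, forall n : nat, (M <= n)%N ->
        hnorm (u n - l) < e
}.

Definition bounded_op (T : H -> H) : Prop :=
  (forall (a : R[i]) (x y : H), T (a *: x + y) = a *: T x + T y) /\
  exists M : R, forall x : H, hnorm (T x) <= M * hnorm x.

Definition is_adjoint (T S : H -> H) : Prop := forall x y : H, ip (T x) y = ip x (S y).

Definition adjoint (T : H -> H) : H -> H :=
  epsilon (inhabits (fun x : H => x)) (fun S => is_adjoint T S).

Definition opadd (S T : H -> H) : H -> H := fun x => S x + T x.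
Definition opsub (S T : H -> H) : H -> H := fun x => S x - T x.
Definition opscale (a : R[i]) (T : H -> H) : H -> H := fun x => a *: T x.
Definition opmul (S T : H -> H) : H -> H := fun x => S (T x).

Definition opRe (T : H -> H) : H -> H := opscale (2^-1) (opadd T (adjoint T)).

Definition expi (t : R) : R[i] := Complex (cos t) (sin t).

Definition wN (N : (H -> H) -> R) (T : H -> H) : R :=
  sup [set r | exists t : R, r = N (opRe (opscale (expi t) T))].

Definition wNe (N : (H -> H) -> R) (B C : H -> H) : R :=
  sup [set r | exists (l1 l2 : R[i]) (t : R),
         `|l1| ^+ 2 + `|l2| ^+ 2 <= 1 /\
         r = N (opRe (opscale (expi t) (opadd (opscale l1 B) (opscale l2 C))))].

Record algebra_sa_norm (N : (H -> H) -> R) : Prop := AlgSANorm {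
  N_ge0 : forall X, bounded_op X -> 0 <= N X;
  N_eq0 : forall X, bounded_op X -> N X = 0 -> X = (fun _ => 0);
  N_triangle : forall X Y, bounded_op X -> bounded_op Y -> N (opadd X Y) <= N X + N Y;
  N_homog : forall (a : R[i]) X, bounded_op X -> N (opscale a X) = complex.Re `|a| * N X;
  N_submult : forall X Y, bounded_op X -> bounded_op Y -> N (opmul X Y) <= N X * N Y;
  N_selfadj : forall X, bounded_op X -> N (adjoint X) = N X
}.

End Hilbert.

(* The adjoint of a bounded operator comes from the Riesz representation
   theorem, proved by minimising the norm on the affine hyperplane f = 1 of a
   bounded functional f.  Then w_N is a seminorm with N(T) <= 2 w_N(T), and
   three estimates combine:
   - 2 (C^*C + B^*B) = (B+C)^*(B+C) + (B-C)^*(B-C) and N(X^*X) <= N(X)^2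
     <= 4 w_N(X)^2 give N(C^*C + B^*B) <= 2 (w_N(B+C)^2 + w_N(B-C)^2);
   - B and C are half the sum and half the difference of B+C and B-C, so
     2 max (w_N(B), w_N(C)) <= w_N(B+C) + w_N(B-C);
   - B +- C = sqrt 2 (B / sqrt 2 +- C / sqrt 2) gives
     w_N(B +- C)^2 <= 2 w_(N,e)(B,C)^2.
   With a = w_N(B+C) and b = w_N(B-C) the left-hand side is then at most
   (a^2 + b^2)/4 + (a + b)|a - b|/4 = max(a^2, b^2)/2 <= w_(N,e)(B,C)^2. *)

From HB Require Import structures.
From mathcomp Require Import all_boot all_order all_algebra.
From mathcomp Require Import complex.
From mathcomp Require Import boolp classical_sets reals trigo.
From mathcomp Require Import ring lra.
From Stdlib Require Import ClassicalEpsilon.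
Set Implicit Arguments. Unset Strict Implicit. Unset Printing Implicit Defensive.
Import Order.TTheory GRing.Theory Num.Theory.
Local Open Scope ring_scope.
Local Open Scope complex_scope.
Local Open Scope classical_set_scope.

Lemma ler_addgt0_scaled (R : realFieldType) (a b K : R) :
  (forall e, 0 < e -> e <= 1 -> a <= b + K * e) -> a <= b.
Proof.
move=> h; apply/ler_addgt0Pr => e e0.
have K1 : 0 < `|K| + 1 by rewrite ltr_wpDl.
pose d := Num.min 1 (e / (`|K| + 1)).
have d0 : 0 < d by rewrite lt_min ltr01 divr_gt0.
have d1 : d <= 1 by rewrite ge_min lexx.
have Kd : K * d <= e.
  apply: le_trans (ler_norm _) _; rewrite normrM (gtr0_norm d0).
  have : d <= e / (`|K| + 1) by rewrite ge_min lexx orbT.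
  rewrite ler_pdivlMr // => hd; nra.
by apply: le_trans (h d d0 d1) _; rewrite lerD2l.
Qed.

Lemma inv_succ_small (R : archiRealFieldType) (e : R) :
  0 < e -> exists M : nat, forall n, (M <= n)%N -> (n.+1%:R)^-1 < e.
Proof.
move=> e0; exists (Num.Def.archi_bound e^-1) => n hn.
have hM : e^-1 < (Num.Def.archi_bound e^-1)%:R.
  by apply: archi_boundP; rewrite invr_ge0 ltW.
rewrite -[e]invrK ltf_pV2 ?posrE ?ltr0n ?invr_gt0 //.
by apply: lt_le_trans hM _; rewrite ler_nat; apply: leq_trans hn _.
Qed.

Section ComplexScalars.
Variable R : rcfType.

Lemma Re_norm (z : R[i]) :
  complex.Re `|z| = Num.sqrt (complex.Re z ^+ 2 + complex.Im z ^+ 2).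
Proof. by rewrite normc_def. Qed.

Lemma Re_realM (r : R) (z : R[i]) : complex.Re (r%:C * z) = r * complex.Re z.
Proof. by case: z => a b /=; rewrite mul0r subr0. Qed.

Lemma Re_norm_ge0 (z : R[i]) : 0 <= complex.Re `|z|.
Proof. by rewrite Re_norm sqrtr_ge0. Qed.

Lemma Re_norm_real (r : R) : complex.Re `|r%:C| = `|r|.
Proof. by rewrite Re_norm /= expr0n /= addr0 sqrtr_sqr. Qed.

Lemma Re_norm_nat (n : nat) : complex.Re `|n%:R : R[i]| = n%:R.
Proof.
have -> : (n%:R : R[i]) = (n%:R : R)%:C by rewrite rmorph_nat.
by rewrite Re_norm_real normr_nat.
Qed.

Lemma Re_norm_half : complex.Re `|2^-1 : R[i]| = 2^-1.
Proof.
have -> : (2^-1 : R[i]) = (2^-1 : R)%:C by rewrite fmorphV rmorph_nat.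
by rewrite Re_norm_real ger0_norm // invr_ge0.
Qed.

Lemma Re_norm_le1 (l1 l2 : R[i]) :
  `|l1| ^+ 2 + `|l2| ^+ 2 <= 1 -> complex.Re `|l1| <= 1.
Proof.
rewrite [`|l1|]normc_def [`|l2|]normc_def -!rmorphXn -rmorphD -[1]/(1%:C) lecR.
rewrite -!Re_norm => hl.
by have := Re_norm_ge0 l1; have := sqr_ge0 (complex.Re `|l2|); nra.
Qed.

End ComplexScalars.

Lemma Re_norm_expi (R : realType) (t : R) : complex.Re `|expi t| = 1.
Proof. by rewrite Re_norm /= cos2Dsin2 sqrtr1. Qed.

Section InnerProduct.
Variables (R : realType) (H : lmodType R[i]) (ip : H -> H -> R[i]).
Hypothesis hH : is_hilbert ip.

Lemma ipDl x y z : ip (x + y) z = ip x z + ip y z.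
Proof. by have := ip_linear hH 1 x y z; rewrite scale1r mul1r. Qed.

Lemma ip0l z : ip 0 z = 0.
Proof. by apply: (addrI (ip 0 z)); rewrite -ipDl !addr0. Qed.

Lemma ipZl a x z : ip (a *: x) z = a * ip x z.
Proof. by have := ip_linear hH a x 0 z; rewrite addr0 ip0l addr0. Qed.

Lemma ipNl x z : ip (- x) z = - ip x z.
Proof. by rewrite -scaleN1r ipZl mulN1r. Qed.

Lemma ipBl x y z : ip (x - y) z = ip x z - ip y z.
Proof. by rewrite ipDl ipNl. Qed.

Lemma ipDr z x y : ip z (x + y) = ip z x + ip z y.
Proof. by rewrite !(ip_conj hH _ z) ipDl rmorphD. Qed.

Lemma ip0r z : ip z 0 = 0.
Proof. by apply: (addrI (ip z 0)); rewrite -ipDr !addr0. Qed.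

Lemma ipZr z a x : ip z (a *: x) = conjc a * ip z x.
Proof. by rewrite !(ip_conj hH _ z) ipZl rmorphM. Qed.

Lemma ipNr z x : ip z (- x) = - ip z x.
Proof. by rewrite !(ip_conj hH _ z) ipNl rmorphN. Qed.

Lemma ipBr z x y : ip z (x - y) = ip z x - ip z y.
Proof. by rewrite ipDr ipNr. Qed.

Lemma ip_injr u v : (forall x, ip x u = ip x v) -> u = v.
Proof.
by move=> h; apply/subr0_eq/(ip_def hH); rewrite ipBr h subrr.
Qed.

Definition sqnorm (x : H) : R := complex.Re (ip x x).

Lemma ipxx x : ip x x = (sqnorm x)%:C.
Proof.
rewrite /sqnorm; have := ip_pos hH x; case: (ip x x) => a b.
by rewrite lecE /= => /andP[/eqP-> _].
Qed.

Lemma sqnorm_ge0 x : 0 <= sqnorm x.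
Proof. by have := ip_pos hH x; rewrite lecE => /andP[]. Qed.

Lemma sqnorm_eq0 x : sqnorm x = 0 -> x = 0.
Proof. by move=> h; apply: (ip_def hH); rewrite ipxx h. Qed.

Lemma sqnormD x y : sqnorm (x + y) = sqnorm x + sqnorm y + 2 * complex.Re (ip x y).
Proof.
rewrite /sqnorm ipDl !ipDr !raddfD /= [ip y x](ip_conj hH).
by case: (ip x y) => a b /=; ring.
Qed.

Lemma sqnormN x : sqnorm (- x) = sqnorm x.
Proof. by rewrite /sqnorm ipNl ipNr opprK. Qed.

Lemma sqnormZ a x :
  sqnorm (a *: x) = (complex.Re a ^+ 2 + complex.Im a ^+ 2) * sqnorm x.
Proof. by rewrite /sqnorm ipZl ipZr ipxx; case: a => u v /=; ring. Qed.

Lemma parallelogram x y :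
  sqnorm (x - y) + sqnorm (x + y) = 2 * sqnorm x + 2 * sqnorm y.
Proof. by rewrite !sqnormD sqnormN ipNr raddfN /=; ring. Qed.

Lemma hnormZ a x : hnorm ip (a *: x) = complex.Re `|a| * hnorm ip x.
Proof. by rewrite /hnorm -!/(sqnorm _) sqnormZ sqrtrM ?addr_ge0 ?sqr_ge0 // Re_norm. Qed.

Lemma hnorm_ge0 x : 0 <= hnorm ip x.
Proof. exact: sqrtr_ge0. Qed.

Lemma hnorm_sqr x : hnorm ip x ^+ 2 = sqnorm x.
Proof. by rewrite sqr_sqrtr // sqnorm_ge0. Qed.

Lemma hnorm_lt_sqr x e : 0 < e -> (hnorm ip x < e) = (sqnorm x < e ^+ 2).
Proof. by move=> e0; rewrite -hnorm_sqr ltr_pXn2r // nnegrE ?hnorm_ge0 ?ltW. Qed.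

Lemma Re_ip_sqr_le x y : complex.Re (ip x y) ^+ 2 <= sqnorm x * sqnorm y.
Proof.
have [/sqnorm_eq0 -> | nx] := eqVneq (sqnorm x) 0.
  by rewrite /sqnorm !ip0l /= expr0n mul0r.
have x0 : 0 < sqnorm x by rewrite lt_neqAle eq_sym nx sqnorm_ge0.
set c := complex.Re (ip x y).
(* expand 0 <= sqnorm (t x + y) at the minimising real t = - c / sqnorm x *)
pose t := - c / sqnorm x.
have ht : t * sqnorm x = - c by rewrite mulfVK.
have := sqnorm_ge0 (t%:C *: x + y).
rewrite sqnormD sqnormZ ipZl Re_realM /= expr0n addr0 -/c => h.
have := mulr_ge0 (ltW x0) h.
have -> : sqnorm x * (t ^+ 2 * sqnorm x + sqnorm y + 2 * (t * c))
    = (t * sqnorm x) ^+ 2 + sqnorm x * sqnorm y + 2 * (t * sqnorm x) * c by ring.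
rewrite ht sqrrN; lra.
Qed.

Lemma ip_sqr_le x y :
  complex.Re (ip x y) ^+ 2 + complex.Im (ip x y) ^+ 2 <= sqnorm x * sqnorm y.
Proof.
set c := ip x y; set Q := complex.Re c ^+ 2 + complex.Im c ^+ 2.
have PQ : 0 <= sqnorm x * sqnorm y by rewrite mulr_ge0 ?sqnorm_ge0.
have [-> // | Q0] := eqVneq Q 0.
have Qpos : 0 < Q by rewrite lt_neqAle eq_sym Q0 addr_ge0 ?sqr_ge0.
(* Cauchy-Schwarz for the rotated vector c^* x, whose inner product with y is real *)
have := Re_ip_sqr_le (conjc c *: x) y.
rewrite ipZl sqnormZ -/c.
have -> : complex.Re (conjc c * c) = Q by rewrite /Q; case: (c) => a b /=; ring.
have -> : complex.Re (conjc c) ^+ 2 + complex.Im (conjc c) ^+ 2 = Q.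
  by rewrite /Q; case: (c) => a b /=; rewrite sqrrN.
by rewrite -mulrA expr2 ler_pM2l.
Qed.

Lemma Re_ip_le x y : complex.Re (ip x y) <= hnorm ip x * hnorm ip y.
Proof.
have hxy : 0 <= hnorm ip x * hnorm ip y by rewrite mulr_ge0 ?hnorm_ge0.
apply: le_trans (ler_norm _) _; rewrite -(ler_pXn2r (n := 2)) ?nnegrE //.
by rewrite real_normK ?num_real // exprMn !hnorm_sqr Re_ip_sqr_le.
Qed.

Lemma hnormD x y : hnorm ip (x + y) <= hnorm ip x + hnorm ip y.
Proof.
rewrite -(ler_pXn2r (n := 2)) ?nnegrE ?addr_ge0 ?hnorm_ge0 //.
rewrite hnorm_sqr sqnormD sqrrD !hnorm_sqr.
by have := Re_ip_le x y; lra.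
Qed.

Lemma sqnorm_le_of_approx p d : 0 <= d ->
    (forall e, 0 < e -> exists v, sqnorm v < d + e /\ sqnorm (p - v) < e ^+ 2) ->
  sqnorm p <= d.
Proof.
move=> d0 happrox; pose D := Num.sqrt (d + 1).
apply: (@ler_addgt0_scaled _ _ _ (2 + 2 * D)) => e e0 e1.
have [v [hv hpv]] := happrox e e0.
have -> : p = v + (p - v) by rewrite addrC subrK.
rewrite sqnormD.
have hvD : hnorm ip v <= D by rewrite ler_wsqrtr //; lra.
have hpvE : hnorm ip (p - v) <= e by rewrite ltW // hnorm_lt_sqr.
have := Re_ip_le v (p - v).
have : hnorm ip v * hnorm ip (p - v) <= D * e by rewrite ler_pM ?hnorm_ge0.
have : e ^+ 2 <= e by rewrite expr2 ger_pMr.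
lra.
Qed.

Lemma ip_eq0_of_sqnorm_min p k :
  (forall s : R[i], sqnorm p <= sqnorm (p + s *: k)) -> ip k p = 0.
Proof.
move=> pmin; set q := ip k p.
set Q := complex.Re q ^+ 2 + complex.Im q ^+ 2.
have k0 := sqnorm_ge0 k.
pose t := (sqnorm k + 1)^-1.
have t0 : 0 < t by rewrite invr_gt0; lra.
have tk : t * sqnorm k < 1 by rewrite mulrC ltr_pdivrMr; lra.
(* moving p by s k with s = - t q^* changes sqnorm p by t Q (t sqnorm k - 2) *)
have := pmin (- (t%:C * conjc q)).
rewrite sqnormD sqnormZ ipZr (ip_conj hH) -/q.
have -> : complex.Re (- (t%:C * conjc q)) ^+ 2 + complex.Im (- (t%:C * conjc q)) ^+ 2
    = t ^+ 2 * Q by rewrite /Q; case: (q) => a b /=; ring.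
have -> : complex.Re (conjc (- (t%:C * conjc q)) * conjc q) = - t * Q.
  by rewrite /Q; case: (q) => a b /=; ring.
rewrite -subr_ge0.
have -> : sqnorm p + t ^+ 2 * Q * sqnorm k + 2 * (- t * Q) - sqnorm p
    = t * (Q * (t * sqnorm k - 2)) by ring.
rewrite pmulr_rge0 // => h.
have Q0 : 0 <= Q by rewrite addr_ge0 ?sqr_ge0.
have QE : Q = 0 by nra.
move: QE; rewrite /Q; case: (q) => a b /= QE.
by apply/eqP; rewrite eq_complex /=; apply/andP; split; apply/eqP; nra.
Qed.

End InnerProduct.

Section Riesz.
Variables (R : realType) (H : lmodType R[i]) (ip : H -> H -> R[i]).
Hypothesis hH : is_hilbert ip.
Variables (f : H -> R[i]) (K : R).
Hypothesis f_linear : forall a x y, f (a *: x + y) = a * f x + f y.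
Hypothesis f_bounded :
  forall v, complex.Re (f v) ^+ 2 + complex.Im (f v) ^+ 2 <= K ^+ 2 * sqnorm ip v.

Let f0 : f 0 = 0.
Proof.
have := f_linear 1 0 0; rewrite scaler0 addr0 mul1r => h.
by apply: (addrI (f 0)); rewrite -h addr0.
Qed.

Let fD x y : f (x + y) = f x + f y.
Proof. by have := f_linear 1 x y; rewrite scale1r mul1r. Qed.

Let fZ a x : f (a *: x) = a * f x.
Proof. by have := f_linear a x 0; rewrite !addr0 f0 addr0. Qed.

Let fB x y : f (x - y) = f x - f y.
Proof. by rewrite fD -scaleN1r fZ mulN1r. Qed.

Lemma eq0_of_small_preimage (c : R[i]) :
  (forall e, 0 < e -> exists v, f v = c /\ sqnorm ip v < e) -> c = 0.
Proof.
move=> hc.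
have : complex.Re c ^+ 2 + complex.Im c ^+ 2 <= 0.
  apply: (@ler_addgt0_scaled _ _ _ (K ^+ 2)) => e e0 _.
  have [v [<- hv]] := hc e e0.
  rewrite add0r; apply: le_trans (f_bounded v) _.
  by rewrite ler_wpM2l ?sqr_ge0 ?ltW.
case: c {hc} => a b /= hab.
by apply/eqP; rewrite eq_complex /=; apply/andP; split; apply/eqP; nra.
Qed.

Section UnitLevel.
Variable x1 : H.
Hypothesis f_x1 : f x1 = 1.

Let level := sqnorm ip @` [set x | f x = 1].
Let d := inf level.

Let level_inf : has_inf level.
Proof.
split; first by exists (sqnorm ip x1), x1.
by exists 0 => _ [x _ <-]; apply: sqnorm_ge0.
Qed.

Let d_le x : f x = 1 -> d <= sqnorm ip x.
Proof. by move=> fx; apply: ge_inf level_inf.2 _ _; exists x. Qed.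

Let d_ge0 : 0 <= d.
Proof. by apply: lb_le_inf level_inf.1 _ => _ [x _ <-]; apply: sqnorm_ge0. Qed.

Let d_approx e : 0 < e -> exists x, f x = 1 /\ sqnorm ip x < d + e.
Proof. by move=> e0; have [_ [x fx <-] hx] := inf_adherent e0 level_inf; exists x. Qed.

Lemma level_sqnormB a b ea eb : f a = 1 -> f b = 1 ->
  sqnorm ip a < d + ea -> sqnorm ip b < d + eb -> sqnorm ip (a - b) <= 2 * ea + 2 * eb.
Proof.
move=> fa fb ha hb; pose m := (2^-1 : R[i]) *: (a + b).
have fm : f m = 1 by rewrite fZ fD fa fb; field.
have mm : m + m = a + b.
  by rewrite -scalerDl -[in RHS](scale1r (a + b)); congr (_ *: _); field.
have hm : 4 * d <= sqnorm ip (a + b).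
  by rewrite -mm (sqnormD hH); have := d_le fm; rewrite /sqnorm; lra.
by have := parallelogram hH a b; lra.
Qed.

Let inv_succ_gt0 n : 0 < (n.+1%:R : R)^-1.
Proof. by rewrite invr_gt0 ltr0n. Qed.

Let u n : H := sval (cid (d_approx (inv_succ_gt0 n))).

Let uP n : f (u n) = 1 /\ sqnorm ip (u n) < d + (n.+1%:R)^-1.
Proof. exact: svalP (cid (d_approx (inv_succ_gt0 n))). Qed.

Lemma minimizing_sequence_cvg : exists p, forall e, 0 < e ->
  exists M, forall n, (M <= n)%N -> sqnorm ip (u n - p) < e.
Proof.
have u_cauchy e : 0 < e -> exists M, forall m n, (M <= m)%N -> (M <= n)%N ->
    hnorm ip (u m - u n) < e.
  move=> e0; have [M hM] := inv_succ_small (divr_gt0 (exprn_gt0 2 e0) (ltr0n _ 4)).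
  exists M => m n hm hn; rewrite hnorm_lt_sqr //.
  have [[fm um] [fn un]] := (uP m, uP n).
  have := level_sqnormB fm fn um un.
  have := hM m hm; have := hM n hn.
  by move: (m.+1%:R^-1) (n.+1%:R^-1) => a b; lra.
have [p hp] := ip_complete hH u_cauchy.
exists p => e e0.
have [M hM] : exists M, forall n, (M <= n)%N -> hnorm ip (u n - p) < Num.sqrt e.
  by apply: hp; rewrite sqrtr_gt0.
exists M => n hn; rewrite -[e](@sqr_sqrtr _ e) ?ltW // -hnorm_lt_sqr ?sqrtr_gt0 //.
by apply: hM.
Qed.

Lemma exists_sqnorm_min_level :
  exists2 p, f p = 1 & forall x, f x = 1 -> sqnorm ip p <= sqnorm ip x.
Proof.
have [p hp] := minimizing_sequence_cvg.
have fp : f p = 1.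
  apply/eqP; rewrite eq_sym -subr_eq0; apply/eqP/eq0_of_small_preimage => e e0.
  have [M hM] := hp e e0.
  by exists (u M - p); rewrite fB (uP M).1 hM.
exists p => // x fx; apply: le_trans (d_le fx).
apply: sqnorm_le_of_approx => // e e0.
have [M1 hM1] := inv_succ_small e0.
have [M2 hM2] := hp _ (exprn_gt0 2 e0).
pose n := maxn M1 M2; exists (u n); split.
  have := hM1 n (leq_maxl _ _); have := (uP n).2.
  by move: (n.+1%:R^-1) => a; lra.
by rewrite -(sqnormN hH) opprB hM2 // leq_maxr.
Qed.

Lemma riesz_unit_level : exists z, forall x, f x = ip x z.
Proof.
have [p fp pmin] := exists_sqnorm_min_level.
have orth k : f k = 0 -> ip k p = 0.
  move=> fk; apply: (ip_eq0_of_sqnorm_min hH) => s.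
  by apply: pmin; rewrite fD fZ fk mulr0 addr0.
have np : sqnorm ip p != 0.
  apply/eqP => /(sqnorm_eq0 hH) p0.
  by move: fp; rewrite p0 f0 => /eqP; rewrite eq_sym oner_eq0.
exists (((sqnorm ip p)^-1)%:C *: p) => x.
rewrite (ipZr hH) conjc_real.
have := orth (x - f x *: p); rewrite fB fZ fp mulr1 subrr => /(_ erefl).
rewrite (ipBl hH) (ipZl hH) (ipxx hH) => /eqP; rewrite subr_eq0 => /eqP ->.
by rewrite mulrCA -rmorphM mulVf // rmorph1 mulr1.
Qed.

End UnitLevel.

Lemma riesz_representation : exists z, forall x, f x = ip x z.
Proof.
have [f_eq0 | /existsNP [x0 /eqP fx0]] := pselect (forall x, f x = 0).
  by exists 0 => x; rewrite f_eq0 (ip0r hH).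
by apply: (@riesz_unit_level ((f x0)^-1 *: x0)); rewrite fZ mulVf.
Qed.

End Riesz.

Section Operators.
Variables (R : realType) (H : lmodType R[i]) (ip : H -> H -> R[i]).
Hypothesis hH : is_hilbert ip.
Local Notation bnd := (bounded_op ip).

Lemma bounded_opP T : bnd T ->
  exists2 M, 0 <= M & forall x, hnorm ip (T x) <= M * hnorm ip x.
Proof.
case=> _ [M hM]; exists (Num.max M 0); first by rewrite le_max lexx orbT.
move=> x; apply: le_trans (hM x) _; apply: ler_wpM2r; first exact: hnorm_ge0.
by rewrite le_max lexx.
Qed.

Section Linearity.
Variable T : H -> H.
Hypothesis bT : bnd T.

Lemma bounded_op0 : T 0 = 0.
Proof.
have := bT.1 1 0 0; rewrite scaler0 addr0 scale1r => h.
by apply: (addrI (T 0)); rewrite -h addr0.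
Qed.

Lemma bounded_opD x y : T (x + y) = T x + T y.
Proof. by have := bT.1 1 x y; rewrite !scale1r. Qed.

Lemma bounded_opZ a x : T (a *: x) = a *: T x.
Proof. by have := bT.1 a x 0; rewrite !addr0 bounded_op0 addr0. Qed.

Lemma bounded_opN x : T (- x) = - T x.
Proof. by rewrite -scaleN1r bounded_opZ scaleN1r. Qed.

End Linearity.

Lemma bounded_op_add X Y : bnd X -> bnd Y -> bnd (opadd X Y).
Proof.
move=> bX bY; split.
  by move=> a x y; rewrite /opadd bX.1 bY.1 scalerDr addrACA.
have [M1 M10 h1] := bounded_opP bX; have [M2 M20 h2] := bounded_opP bY.
exists (M1 + M2) => x; apply: le_trans (hnormD hH _ _) _.
by have := h1 x; have := h2 x; lra.
Qed.

Lemma bounded_op_scale a X : bnd X -> bnd (opscale a X).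
Proof.
move=> bX; split.
  by move=> b x y; rewrite /opscale bX.1 scalerDr !scalerA mulrC.
have [M M0 h] := bounded_opP bX.
exists (complex.Re `|a| * M) => x.
by rewrite /opscale (hnormZ hH) -mulrA ler_wpM2l ?Re_norm_ge0 ?h.
Qed.

Lemma bounded_op_mul X Y : bnd X -> bnd Y -> bnd (opmul X Y).
Proof.
move=> bX bY; split; first by move=> a x y; rewrite /opmul bY.1 bX.1.
have [M1 M10 h1] := bounded_opP bX; have [M2 M20 h2] := bounded_opP bY.
exists (M1 * M2) => x; apply: le_trans (h1 _) _.
by rewrite -mulrA ler_wpM2l ?h2.
Qed.

Lemma opsubE (X Y : H -> H) : opsub X Y = opadd X (opscale (-1) Y).
Proof. by apply: funext => x; rewrite /opsub /opadd /opscale scaleN1r. Qed.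

Lemma bounded_op_sub X Y : bnd X -> bnd Y -> bnd (opsub X Y).
Proof.
by move=> bX bY; rewrite opsubE; apply/bounded_op_add/bounded_op_scale.
Qed.

Lemma adjoint_exists T : bnd T -> exists S, is_adjoint ip T S.
Proof.
move=> bT; have [M M0 hM] := bounded_opP bT.
have rep y : exists z, forall x, ip (T x) y = ip x z.
  apply: (riesz_representation hH (K := M * hnorm ip y)).
    by move=> a x x'; rewrite bT.1 (ipDl hH) (ipZl hH).
  move=> v; apply: le_trans (ip_sqr_le hH _ _) _.
  rewrite exprMn (hnorm_sqr hH) mulrAC ler_wpM2r ?sqnorm_ge0 //.
  by rewrite -!(hnorm_sqr hH) -exprMn ler_pXn2r ?nnegrE ?mulr_ge0 ?hnorm_ge0 ?hM.
have [S hS] := @boolp.choice _ _ _ rep.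
by exists S => x y; apply: hS.
Qed.

Lemma adjointP T : bnd T -> is_adjoint ip T (adjoint ip T).
Proof. by move=> bT; apply: epsilon_spec; apply: adjoint_exists. Qed.

Lemma adjoint_unique T S : bnd T -> is_adjoint ip T S -> adjoint ip T = S.
Proof.
move=> bT hS; apply: funext => y; apply: (ip_injr hH) => x.
by rewrite -(adjointP bT) hS.
Qed.

Lemma bounded_op_adjoint T : bnd T -> bnd (adjoint ip T).
Proof.
move=> bT; have hA := adjointP bT; set A := adjoint ip T.
split=> [a y y' | ].
  apply: (ip_injr hH) => x.
  by rewrite -hA (ipDr hH) (ipZr hH) (ipDr hH) (ipZr hH) !hA.
have [M M0 hM] := bounded_opP bT; exists M => y.
have hAy : hnorm ip (A y) ^+ 2 <= M * hnorm ip y * hnorm ip (A y).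
  rewrite (hnorm_sqr hH) /sqnorm -hA; apply: le_trans (Re_ip_le hH _ _) _.
  by rewrite mulrAC ler_wpM2r ?hnorm_ge0 ?hM.
have [-> | Ay0] := eqVneq (hnorm ip (A y)) 0; first by rewrite mulr_ge0 ?hnorm_ge0.
have Aypos : 0 < hnorm ip (A y) by rewrite lt_neqAle eq_sym Ay0 hnorm_ge0.
by rewrite -(ler_pM2r Aypos) -expr2.
Qed.

Lemma bounded_op_Re T : bnd T -> bnd (opRe ip T).
Proof.
by move=> bT; apply/bounded_op_scale/bounded_op_add/bounded_op_adjoint.
Qed.

Lemma adjointD X Y : bnd X -> bnd Y ->
  adjoint ip (opadd X Y) = opadd (adjoint ip X) (adjoint ip Y).
Proof.
move=> bX bY; apply: adjoint_unique; first exact: bounded_op_add.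
by move=> x y; rewrite /opadd (ipDl hH) (ipDr hH) (adjointP bX) (adjointP bY).
Qed.

Lemma adjointZ a X : bnd X ->
  adjoint ip (opscale a X) = opscale (conjc a) (adjoint ip X).
Proof.
move=> bX; apply: adjoint_unique; first exact: bounded_op_scale.
move=> x y; rewrite /opscale (ipZl hH) (ipZr hH) (adjointP bX).
by case: a => ? ? /=; rewrite opprK.
Qed.

Lemma adjointB X Y : bnd X -> bnd Y ->
  adjoint ip (opsub X Y) = opsub (adjoint ip X) (adjoint ip Y).
Proof.
move=> bX bY; rewrite !opsubE adjointD //; last exact: bounded_op_scale.
by rewrite adjointZ //; congr (opadd _ (opscale _ _)); rewrite /= oppr0.
Qed.

Lemma opscaleDr a (X Y : H -> H) :
  opscale a (opadd X Y) = opadd (opscale a X) (opscale a Y).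
Proof. by apply: funext => x; rewrite /opscale /opadd scalerDr. Qed.

Lemma opscaleA a b (X : H -> H) : opscale a (opscale b X) = opscale (a * b) X.
Proof. by apply: funext => x; rewrite /opscale scalerA. Qed.

Lemma opRe_add X Y : bnd X -> bnd Y ->
  opRe ip (opadd X Y) = opadd (opRe ip X) (opRe ip Y).
Proof.
move=> bX bY; rewrite /opRe adjointD // -opscaleDr; congr (opscale _ _).
by apply: funext => x; rewrite /opadd addrACA.
Qed.

Lemma opRe_real r X : bnd X ->
  opRe ip (opscale r%:C X) = opscale r%:C (opRe ip X).
Proof.
move=> bX; rewrite /opRe adjointZ // conjc_real -opscaleDr !opscaleA.
by rewrite mulrC.
Qed.

End Operators.

Section NumericalRadius.
Variables (R : realType) (H : lmodType R[i]) (ip : H -> H -> R[i]).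
Hypothesis hH : is_hilbert ip.
Variable N : (H -> H) -> R.
Hypothesis hN : algebra_sa_norm ip N.
Local Notation bnd := (bounded_op ip).
Local Notation wN := (wN ip N).

Lemma N_Re_le X : bnd X -> N (opRe ip X) <= N X.
Proof.
move=> bX; have bXa := bounded_op_adjoint hH bX.
rewrite /opRe (N_homog hN) ?Re_norm_half; last exact: bounded_op_add.
have := N_triangle hN bX bXa; rewrite (N_selfadj hN bX); lra.
Qed.

Lemma N_Re_rot_le_wN T t : bnd T -> N (opRe ip (opscale (expi t) T)) <= wN T.
Proof.
move=> bT; apply: ub_le_sup; last by exists t.
exists (N T) => _ [s ->]; apply: le_trans (N_Re_le (bounded_op_scale hH _ bT)) _.
by rewrite (N_homog hN) // Re_norm_expi mul1r.
Qed.

Lemma wN_le T c : (forall t, N (opRe ip (opscale (expi t) T)) <= c) -> wN T <= c.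
Proof.
move=> h; apply: ge_sup; last by move=> _ [t ->].
by exists (N (opRe ip (opscale (expi 0) T))), 0.
Qed.

Lemma wN_ge0 T : bnd T -> 0 <= wN T.
Proof.
move=> bT; apply: le_trans (N_Re_rot_le_wN 0 bT).
exact/(N_ge0 hN)/bounded_op_Re/bounded_op_scale.
Qed.

Lemma wN_add_le X Y : bnd X -> bnd Y -> wN (opadd X Y) <= wN X + wN Y.
Proof.
move=> bX bY; apply: wN_le => t.
have [beX beY] := (bounded_op_scale hH (expi t) bX, bounded_op_scale hH (expi t) bY).
rewrite opscaleDr (opRe_add hH) //.
apply: le_trans (N_triangle hN (bounded_op_Re hH beX) (bounded_op_Re hH beY)) _.
by rewrite lerD ?N_Re_rot_le_wN.
Qed.

Lemma wN_scale_real_le r X : bnd X -> wN (opscale r%:C X) <= `|r| * wN X.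
Proof.
move=> bX; apply: wN_le => t; have beX := bounded_op_scale hH (expi t) bX.
rewrite opscaleA mulrC -opscaleA (opRe_real hH) //.
rewrite (N_homog hN) ?Re_norm_real; last exact: bounded_op_Re.
by rewrite ler_wpM2l ?N_Re_rot_le_wN.
Qed.

Lemma wN_midpoint_le X Y : bnd X -> bnd Y ->
  2 * wN (opscale (2^-1 : R)%:C (opadd X Y)) <= wN X + wN Y.
Proof.
move=> bX bY; have := wN_scale_real_le (2^-1) (bounded_op_add hH bX bY).
have := wN_add_le bX bY; rewrite ger0_norm ?invr_ge0 //; lra.
Qed.

Lemma N_le_2wN T : bnd T -> N T <= 2 * wN T.
Proof.
move=> bT.
pose P := opRe ip (opscale (expi 0) T).
pose Q := opRe ip (opscale (expi (pi / 2)) T).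
have bQ : bnd Q by exact/bounded_op_Re/bounded_op_scale.
(* T = Re T + (- i) Re (i T), and e^{i 0} = 1, e^{i pi/2} = i *)
have eT : T = opadd P (opscale (- 'i) Q).
  apply: funext => x.
  rewrite /P /Q /opRe !(adjointZ hH) // /opadd /opscale /expi.
  rewrite cos0 sin0 cos_pihalf -[pi / 2]add0r sinDpihalf cos0.
  rewrite !scalerDr !scalerA addrACA -!scalerDl.
  rewrite [X in X *: T x](_ : _ = 1); last first.
    by apply/eqP; rewrite eq_complex /=; apply/andP; split; apply/eqP; field.
  rewrite [X in X *: adjoint ip T x](_ : _ = 0); last first.
    by apply/eqP; rewrite eq_complex /=; apply/andP; split; apply/eqP; field.
  by rewrite scale1r scale0r addr0.
have h := N_triangle hN (bounded_op_Re hH (bounded_op_scale hH (expi 0) bT))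
  (bounded_op_scale hH (- 'i) bQ).
have Ni : complex.Re `|- 'i : R[i]| = 1.
  by rewrite Re_norm /= oppr0 expr0n add0r sqrrN expr1n sqrtr1.
rewrite (N_homog hN) // Ni mul1r -eT in h.
have := N_Re_rot_le_wN 0 bT; have := N_Re_rot_le_wN (pi / 2) bT.
rewrite -/P -/Q; lra.
Qed.

Lemma N_adjoint_mul_le X : bnd X -> N (opmul (adjoint ip X) X) <= N X ^+ 2.
Proof.
move=> bX; apply: le_trans (N_submult hN (bounded_op_adjoint hH bX) bX) _.
by rewrite (N_selfadj hN bX) expr2.
Qed.

End NumericalRadius.

Section HalfSums.
Variables (F : numFieldType) (V : lmodType F).

Lemma half_scale_addrr (v : V) : (2^-1 : F) *: (v + v) = v.
Proof. by rewrite -mulr2n -scaler_nat scalerA mulVf ?scale1r // pnatr_eq0. Qed.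

Lemma half_scale_add_addB (b c : V) : (2^-1 : F) *: ((b + c) + (b - c)) = b.
Proof. by rewrite addrACA subrr addr0 half_scale_addrr. Qed.

Lemma half_scale_add_subB (b c : V) : (2^-1 : F) *: ((b + c) - (b - c)) = c.
Proof. by rewrite opprB addrC addrA subrK half_scale_addrr. Qed.

Lemma add_sub_sqr_parallelogram (a b c d : V) :
  (a + b + (c + d)) + (a - b - (c - d)) = (2 : F) *: (a + d).
Proof.
rewrite scaler_nat mulr2n opprB (addrACA (a + b)) (addrACA a b a) subrr addr0.
by rewrite (addrC d) (addrACA c) subrr add0r addrACA.
Qed.

End HalfSums.

Lemma adjoint_mul_parallelogram (R : realType) (H : lmodType R[i])
    (ip : H -> H -> R[i]) (hH : is_hilbert ip) (B C : H -> H) :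
    bounded_op ip B -> bounded_op ip C ->
  opadd (opmul (adjoint ip (opadd B C)) (opadd B C))
        (opmul (adjoint ip (opsub B C)) (opsub B C))
  = opscale 2 (opadd (opmul (adjoint ip B) B) (opmul (adjoint ip C) C)).
Proof.
move=> bB bC; have [bBa bCa] := (bounded_op_adjoint hH bB, bounded_op_adjoint hH bC).
apply: funext => x; rewrite (adjointD hH) // (adjointB hH) //.
rewrite /opadd /opsub /opmul /opscale.
rewrite !(bounded_opD bBa, bounded_opD bCa, bounded_opN bBa, bounded_opN bCa).
exact: add_sub_sqr_parallelogram.
Qed.

Lemma max_mul_dist_le (R : realFieldType) (n a b mB mC W : R) :
  0 <= a -> 0 <= b -> n <= 2 * (a ^+ 2 + b ^+ 2) ->
  a ^+ 2 <= 2 * W ^+ 2 -> b ^+ 2 <= 2 * W ^+ 2 ->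
  2 * Num.max mB mC <= a + b ->
  8^-1 * n + 2^-1 * Num.max mB mC * `|a - b| <= W ^+ 2.
Proof.
move=> a0 b0 hn ha hb; set m := Num.max mB mC => hm.
have [hab | hab] := leP b a.
  by rewrite ger0_norm ?subr_ge0 //; nra.
by rewrite ltr0_norm ?subr_lt0 //; nra.
Qed.

Section Estimates.
Variables (R : realType) (H : lmodType R[i]) (ip : H -> H -> R[i]).
Hypothesis hH : is_hilbert ip.
Variable N : (H -> H) -> R.
Hypothesis hN : algebra_sa_norm ip N.
Local Notation bnd := (bounded_op ip).
Local Notation wN := (wN ip N).
Variables (B C : H -> H).
Hypotheses (bB : bnd B) (bC : bnd C).

Let bP : bnd (opadd B C) := bounded_op_add hH bB bC.
Let bQ : bnd (opsub B C) := bounded_op_sub hH bB bC.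

Lemma N_adjoint_mul_sum_le :
  N (opadd (opmul (adjoint ip C) C) (opmul (adjoint ip B) B))
  <= 2 * (wN (opadd B C) ^+ 2 + wN (opsub B C) ^+ 2).
Proof.
have bBB := bounded_op_mul (bounded_op_adjoint hH bB) bB.
have bCC := bounded_op_mul (bounded_op_adjoint hH bC) bC.
have := N_triangle hN (bounded_op_mul (bounded_op_adjoint hH bP) bP)
                      (bounded_op_mul (bounded_op_adjoint hH bQ) bQ).
rewrite adjoint_mul_parallelogram // (N_homog hN) ?Re_norm_nat; last first.
  exact: bounded_op_add.
have sq X : bnd X -> N (opmul (adjoint ip X) X) <= 4 * wN X ^+ 2.
  move=> bX; apply: le_trans (N_adjoint_mul_le hH hN bX) _.
  have := N_le_2wN hH hN bX; have := N_ge0 hN bX; nra.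
have := sq _ bP; have := sq _ bQ.
have -> : opadd (opmul (adjoint ip C) C) (opmul (adjoint ip B) B)
    = opadd (opmul (adjoint ip B) B) (opmul (adjoint ip C) C).
  by apply: funext => x; rewrite /opadd addrC.
lra.
Qed.

Lemma max_wN_le_add_sub :
  2 * Num.max (wN B) (wN C) <= wN (opadd B C) + wN (opsub B C).
Proof.
have half : (2^-1 : R)%:C = 2^-1 by rewrite fmorphV rmorph_nat.
have bQ' := bounded_op_scale hH (-1)%:C bQ.
have := wN_midpoint_le hH hN bP bQ; have := wN_midpoint_le hH hN bP bQ'.
have := wN_scale_real_le hH hN (-1) bQ; rewrite normrN normr1 mul1r.
have -> : opscale (2^-1 : R)%:C (opadd (opadd B C) (opsub B C)) = B.
  by apply: funext => x; rewrite half /opscale /opadd /opsub half_scale_add_addB.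
have -> : opscale (2^-1 : R)%:C
    (opadd (opadd B C) (opscale (-1)%:C (opsub B C))) = C.
  apply: funext => x; rewrite half /opscale /opadd /opsub.
  by rewrite rmorphN1 scaleN1r half_scale_add_subB.
by case: (leP (wN B) (wN C)) => _; lra.
Qed.

Lemma wNe_has_ubound : has_ubound [set r | exists (l1 l2 : R[i]) (t : R),
    `|l1| ^+ 2 + `|l2| ^+ 2 <= 1 /\
    r = N (opRe ip (opscale (expi t) (opadd (opscale l1 B) (opscale l2 C))))].
Proof.
exists (N B + N C) => _ [l1 [l2 [t [hl ->]]]].
have bl := bounded_op_add hH (bounded_op_scale hH l1 bB) (bounded_op_scale hH l2 bC).
apply: le_trans (N_Re_le hH hN (bounded_op_scale hH _ bl)) _.
rewrite (N_homog hN) // Re_norm_expi mul1r.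
apply: le_trans (N_triangle hN (bounded_op_scale hH _ bB) (bounded_op_scale hH _ bC)) _.
rewrite !(N_homog hN) //.
have l1le := Re_norm_le1 hl; rewrite addrC in hl; have l2le := Re_norm_le1 hl.
have := N_ge0 hN bB; have := N_ge0 hN bC.
have := Re_norm_ge0 l1; have := Re_norm_ge0 l2; nra.
Qed.

Lemma wN_lincomb_le_wNe (l1 l2 : R[i]) : `|l1| ^+ 2 + `|l2| ^+ 2 <= 1 ->
  wN (opadd (opscale l1 B) (opscale l2 C)) <= wNe ip N B C.
Proof.
move=> hl; apply: wN_le => t; apply: ub_le_sup wNe_has_ubound _ _.
by exists l1, l2, t.
Qed.

Lemma wN_add_scale_sqr_le (e : R[i]) : `|e| = 1 ->
  wN (opadd B (opscale e C)) ^+ 2 <= 2 * wNe ip N B C ^+ 2.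
Proof.
move=> e1; pose s := Num.sqrt (2 : R); pose c := (s^-1)%:C.
have s0 : 0 < s by rewrite sqrtr_gt0.
have s2 : s ^+ 2 = 2 by rewrite sqr_sqrtr.
(* B + e C is sqrt 2 times a combination with weights of modulus 1 / sqrt 2 *)
have hc : `|c| ^+ 2 + `|c * e| ^+ 2 <= 1.
  rewrite normrM e1 mulr1 ger0_norm ?ler0c ?invr_ge0 ?(ltW s0) //.
  by rewrite -rmorphXn -rmorphD -[1]/(1%:C) lecR exprVn s2; lra.
have eX : opadd B (opscale e C)
    = opscale s%:C (opadd (opscale c B) (opscale (c * e) C)).
  apply: funext => x; rewrite /opadd /opscale scalerDr !scalerA mulrA.
  by rewrite -rmorphM mulfV ?gt_eqF // mul1r scale1r.
have bl := bounded_op_add hH (bounded_op_scale hH c bB) (bounded_op_scale hH (c * e) bC).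
have := wN_scale_real_le hH hN s bl; rewrite -eX ger0_norm ?(ltW s0) // => hX.
have hXW := le_trans hX (ler_wpM2l (ltW s0) (wN_lincomb_le_wNe hc)).
have := wN_ge0 hH hN (bounded_op_add hH bB (bounded_op_scale hH e bC)).
rewrite -s2 -exprMn; nra.
Qed.

End Estimates.

Theorem theorem2p14 (R : realType) (H : lmodType R[i]) (ip : H -> H -> R[i])
  (hH : is_hilbert ip) (N : (H -> H) -> R) (hN : algebra_sa_norm ip N)
  (B C : H -> H) (hB : bounded_op ip B) (hC : bounded_op ip C) :
  8^-1 * N (opadd (opmul (adjoint ip C) C) (opmul (adjoint ip B) B))
  + 2^-1 * Num.max (wN ip N B) (wN ip N C)
      * `|wN ip N (opadd B C) - wN ip N (opsub B C)|
  <= wNe ip N B C ^+ 2.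
Proof.
have hP : opadd B (opscale 1 C) = opadd B C.
  by apply: funext => x; rewrite /opadd /opscale scale1r.
have hQ : opadd B (opscale (-1) C) = opsub B C by rewrite opsubE.
have hPe := wN_add_scale_sqr_le hH hN hB hC (normr1 _).
have hQe := wN_add_scale_sqr_le hH hN hB hC (normrN1 _).
rewrite hP in hPe; rewrite hQ in hQe.
apply: max_mul_dist_le hPe hQe (max_wN_le_add_sub hH hN hB hC).
- exact/(wN_ge0 hH hN)/(bounded_op_add hH).
- exact/(wN_ge0 hH hN)/(bounded_op_sub hH).
- exact: N_adjoint_mul_sum_le.
Qed.
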